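(* For every map $M$, the set of imbalances in $M$ is a class of homologous $(\bmod 2)$ cycles in the dual of $M$; that is, there is a cycle $c$ of $G_D$ such that the set of imbalances of $M$ (viewed as subsets of $SQ(M)=E(G_D)$) equals $\{c\triangle b: b\in V\}$, where $V$ is the coboundary space of $G_M$.
   Context: A map is a triple $M=(C_M,v_M,f_M)$ where $C_M$ is a finite cubic graph (multiple edges allowed) and $v_M,f_M$ are disjoint perfect matchings whose union is a disjoint union of 4-cycles, the squares ($SQ(M)$); $a_M$ is the third perfect matching. The vertices of $C_M$ are corners; $v_M(x)$, $a_M(x)$ denote the corner joined to $x$ by the corresponding edge. $G_M$ has vertices the cycles of $v_M\cup a_M$ and edges the squares (each joining the cycles containing its two $v_M$-edges); $G_D$ (graph of the dual $D=(C_M,f_M,v_M)$) has vertices the cycles of $f_M\cup a_M$ and edges the squares (each joining the cycles containing its two $f_M$-edges). A cycle is an edge set with all degrees even. Two cycles of $G_D$ are homologous if their symmetric difference is a boundary in the dual t-map, i.e. (with edge sets identified with $SQ(M)$) an element of the $GF(2)$-coboundary space $V$ of $G_M$. A balancing partition of $M$ is a partition $\{A,B\}$ of the corners such that $x$ and $v_M(x)$ are in different classes and $x$ and $a_M(v_M(x))$ are in the same class, for every corner $x$. A square is balanced if its opposite corners lie in the same class, unbalanced otherwise; an imbalance of $M$ is the set of unbalanced squares of some balancing partition. *)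

From mathcomp Require Import all_boot.
Set Implicit Arguments. Unset Strict Implicit. Unset Printing Implicit Defensive.

(* A map on the finite set of corners T is given by three fixed-point-free
   involutions v, f, a : T -> T (the perfect matchings v_M, f_M, a_M of the
   cubic multigraph C_M: x is joined to v x, f x, a x).  *)
Section MapDefs.
Variables (T : finType) (v f a : T -> T).

Definition fpf_involution (g : T -> T) : Prop :=
  (forall x, g (g x) = x) /\ (forall x, g x != x).

(* v and f are disjoint perfect matchings whose union is a disjoint union of
   4-cycles  x - v x - f (v x) - v (f (v x)) - x  (f closes the cycle). *)
Definition is_map : Prop :=
  [/\ fpf_involution v, fpf_involution f, fpf_involution a,
      (forall x, v x != f x) & (forall x, v (f (v (f x))) = x)].

Definition sq (x : T) : {set T} := [set x; v x; f x; v (f x)].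
Definition SQ : {set {set T}} := [set sq x | x in T].

(* cycles of v ∪ a (vertices of G_M) and of f ∪ a (vertices of G_D) *)
Definition varel : rel T := [rel x y | (y == v x) || (y == a x)].
Definition farel : rel T := [rel x y | (y == f x) || (y == a x)].
Definition vaorb (x : T) : {set T} := [set y | connect varel x y].
Definition faorb (x : T) : {set T} := [set y | connect farel x y].
Definition VGM : {set {set T}} := [set vaorb x | x in T].
Definition VGD : {set {set T}} := [set faorb x | x in T].

(* f-edges of a square; in G_D the square s has one end at the cycle of
   f ∪ a containing each of its two f-edges *)
Definition fedges (s : {set T}) : {set {set T}} := [set [set x; f x] | x in s].

(* degree in G_D of the vertex u in the edge set c (loops count twice) *)
Definition degD (c : {set {set T}}) (u : {set T}) : nat :=
  \sum_(s in c) #|[set e in fedges s | e \subset u]|.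

Definition cycleD (c : {set {set T}}) : Prop :=
  c \subset SQ /\ (forall u, u \in VGD -> ~~ odd (degD c u)).

(* coboundary in G_M of a vertex set W: squares with exactly one end in W;
   the square sq x has its v-edges {x, v x} and {f x, v (f x)}, with ends
   vaorb x and vaorb (f x). *)
Definition coboundM (W : {set {set T}}) : {set {set T}} :=
  [set sq x | x in T & (vaorb x \in W) != (vaorb (f x) \in W)].

Definition in_coboundary_space (b : {set {set T}}) : Prop :=
  exists W : {set {set T}}, W \subset VGM /\ b = coboundM W.

Definition balancing (A : {set T}) : Prop :=
  forall x, ((x \in A) != (v x \in A)) /\ ((x \in A) = (a (v x) \in A)).

Definition imbalance (A : {set T}) : {set {set T}} :=
  [set s in SQ | [exists x in s, (x \in A) != (f (v x) \in A)]].

Definition is_imbalance (S : {set {set T}}) : Prop :=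
  exists A : {set T}, balancing A /\ S = imbalance A.

End MapDefs.

Definition symdiff (T : finType) (A B : {set T}) : {set T} :=
  (A :\: B) :|: (B :\: A).

From mathcomp Require Import all_boot.
Set Implicit Arguments. Unset Strict Implicit. Unset Printing Implicit Defensive.

(* A balancing partition exists: [v] conjugates [p := a \o v] to its inverse
   and maps no [p]-orbit to itself, so a class can be formed by choosing one
   orbit out of each pair {O, v O}.  Two balancing partitions differ on a
   union of cycles of [v ∪ a], and switching a balancing partition on a set W
   of such cycles changes its imbalance by the coboundary of W; hence the
   imbalances form a single coset of V.  A square is unbalanced iff each of its f-edges is
   monochromatic, so twice the degree of a cycle u of [f ∪ a] counts the
   corners [y] of u with [y] and [f y] in the same class.  Inside u, [a]
   exchanges the two classes and [f] exchanges the bichromatic corners of A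
   with those outside A, so there are as many monochromatic corners in A as
   outside A; those in A come in f-pairs, hence the degree is even. *)

Lemma in_symdiff (T : finType) (X Y : {set T}) x :
  (x \in symdiff X Y) = ((x \in X) != (x \in Y)).
Proof. by rewrite !inE; case: (x \in X); case: (x \in Y). Qed.

Lemma connect_sym_involutions (T : finType) (g h : T -> T) :
  involutive g -> involutive h -> connect_sym [rel x y | (y == g x) || (y == h x)].
Proof.
move=> gK hK; apply: sym_connect_sym => x y /=.
by rewrite (eq_sym y) (inv_eq gK) (eq_sym y) (inv_eq hK).
Qed.

Section FixedPointFreeInvolution.
Variables (T : finType) (g : T -> T).
Hypotheses (gK : involutive g) (g_neq : forall x, g x != x).

Lemma eq_pair x y : ([set x; g x] == [set y; g y]) = (x == y) || (x == g y).
Proof.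
apply/eqP/orP => [e | [] /eqP ->] //; last by rewrite gK setUC.
by move: (set21 x (g x)); rewrite e !inE => /orP.
Qed.

Lemma card_closed_pairs (X : {set T}) : (forall x, (g x \in X) = (x \in X)) ->
  #|X| = (#|[set [set x; g x] | x in X]|).*2.
Proof.
move=> gX; rewrite -sum1_card (partition_big_imset (fun x => [set x; g x])).
rewrite -muln2 -sum_nat_const; apply: eq_bigr => _ /imsetP[y Xy ->].
have := cards2 y (g y); rewrite eq_sym g_neq => <-.
rewrite sum1dep_card; apply: eq_card => x.
by rewrite !inE eq_pair andb_idl // => /orP[] /eqP ->; rewrite ?gX.
Qed.

End FixedPointFreeInvolution.

Section Balancing.
Variables (T : finType) (v a : T -> T).
Hypotheses (vK : involutive v) (aK : involutive a).
Hypotheses (v_neq : forall x, v x != x) (a_neq : forall x, a x != x).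

Lemma balancingP (A : {set T}) :
  balancing v a A <->
  (forall x, (v x \in A) = (x \notin A)) /\ (forall x, (a x \in A) = (x \notin A)).
Proof.
have flip (b c : bool) : (b != c) = (c == ~~ b) by case: b; case: c.
split=> [bA | [Av Aa] x]; last by rewrite Aa Av negbK -flip eqxx.
have Av x : (v x \in A) = (x \notin A) by apply/eqP; rewrite -flip; case: (bA x).
by split=> // x; rewrite -[x in a x]vK; case: (bA (v x)) => _ <-.
Qed.

Lemma vaorb_v x : vaorb v a (v x) = vaorb v a x.
Proof.
have va_sym := connect_sym_involutions vK aK.
apply/setP => z; rewrite !inE.
by rewrite -(same_connect1 va_sym (_ : varel v a x (v x))) // /varel /= eqxx.
Qed.

Lemma vaorb_a x : vaorb v a (a x) = vaorb v a x.
Proof.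
have va_sym := connect_sym_involutions vK aK.
apply/setP => z; rewrite !inE.
by rewrite -(same_connect1 va_sym (_ : varel v a x (a x))) // /varel /= eqxx orbT.
Qed.

Definition switch (A : {set T}) (W : {set {set T}}) : {set T} :=
  [set x | (x \in A) != (vaorb v a x \in W)].

Lemma balancing_switch (A : {set T}) (W : {set {set T}}) :
  balancing v a A -> balancing v a (switch A W).
Proof.
case/balancingP=> Av Aa; apply/balancingP.
by split=> x; rewrite !inE ?vaorb_v ?vaorb_a ?Av ?Aa; case: (x \in A); case: (_ \in W).
Qed.

Lemma balancing_eq_switch (A B : {set T}) : balancing v a A -> balancing v a B ->
  exists2 W : {set {set T}}, W \subset VGM v a & B = switch A W.
Proof.
move=> /balancingP[Av Aa] /balancingP[Bv Ba].
pose D := [set x | (x \in A) != (x \in B)].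
have D_closed : closed (varel v a) D.
  move=> x y /orP[] /eqP ->; rewrite !inE ?Av ?Bv ?Aa ?Ba;
  by case: (x \in A); case: (x \in B).
exists (vaorb v a @: D); first by apply/subsetP => _ /imsetP[x _ ->]; exact: imset_f.
have mem_vaorbD x : (vaorb v a x \in vaorb v a @: D) = (x \in D).
  apply/imsetP/idP => [[y Dy exy] | Dx]; last by exists x.
  have : x \in vaorb v a y by rewrite -exy inE connect0.
  by rewrite inE => /(closed_connect D_closed) <-.
apply/setP => x; rewrite [RHS]inE mem_vaorbD inE.
by case: (x \in A); case: (x \in B).
Qed.

Let p x := a (v x).

Lemma p_v_p x : p (v (p x)) = v x.
Proof. by rewrite /p vK aK. Qed.

Lemma p_inj : injective p.
Proof. by apply: (can_inj (g := fun y => v (a y))) => y; rewrite /p aK vK. Qed.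

Lemma v_not_fconnect x : ~~ fconnect p x (v x).
Proof.
have iter_p_inj k : injective (iter k p).
  by elim: k => // k IHk y z /= /p_inj /IHk.
have p_conj k y : iter k p (v (iter k p y)) = v y.
  by elim: k y => // k IHk y; rewrite iterSr [iter k.+1 p y]iterS p_v_p.
apply/negP => /iter_findex; move: (findex _ _ _) => k.
rewrite -(p_conj k./2 x) -{1}(odd_double_half k) -addnn !iterD.
case: (odd k) => /=; last by move/iter_p_inj/eqP; rewrite eq_sym (negbTE (v_neq _)).
by rewrite -iterS iterSr => /iter_p_inj/eqP; rewrite /p (negbTE (a_neq _)).
Qed.

Lemma balancing_exists : exists A : {set T}, balancing v a A.
Proof.
pose r x := enum_rank (froot p x).
have p_sym := fconnect_sym p_inj.
have r_p x : r (p x) = r x.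
  by rewrite /r; congr enum_rank; apply/esym/(rootP p_sym)/fconnect1.
have r_v x : r (v x) != r x.
  by apply: contra (v_not_fconnect x) => /eqP/enum_rank_inj/esym/(rootP p_sym).
exists [set x | r x < r (v x)] => x; rewrite !inE vK; split.
  by move: (r_v x); rewrite -(inj_eq val_inj) /=; case: ltngtP.
by rewrite -/(p x) r_p -[r (v (p x))]r_p p_v_p.
Qed.

End Balancing.

Section Map.
Variables (T : finType) (v f a : T -> T).
Hypothesis hM : is_map v f a.

Lemma vK : involutive v. Proof. by case: hM => [[]]. Qed.
Lemma fK : involutive f. Proof. by case: hM => _ []. Qed.
Lemma aK : involutive a. Proof. by case: hM => _ _ []. Qed.
Lemma v_neq x : v x != x. Proof. by case: hM => [[]]. Qed.
Lemma f_neq x : f x != x. Proof. by case: hM => _ []. Qed.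
Lemma a_neq x : a x != x. Proof. by case: hM => _ _ []. Qed.

Lemma fvC x : f (v x) = v (f x).
Proof. by case: hM => _ _ _ _ /(_ (f x)); rewrite fK => /(canRL vK). Qed.

Lemma sq_v x : sq v f (v x) = sq v f x.
Proof.
apply/setP => z; rewrite !inE fvC !vK.
by case: (z == x); case: (z == v x); case: (z == f x); case: (z == v (f x)).
Qed.

Lemma sq_f x : sq v f (f x) = sq v f x.
Proof.
apply/setP => z; rewrite !inE fK.
by case: (z == x); case: (z == v x); case: (z == f x); case: (z == v (f x)).
Qed.

Lemma mem_sq x : x \in sq v f x.
Proof. by rewrite !inE eqxx. Qed.

Lemma sq_in_SQ x : sq v f x \in SQ v f.
Proof. exact: imset_f. Qed.

Lemma mem_sq_invariant (P : T -> bool) :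
  (forall x, P (v x) = P x) -> (forall x, P (f x) = P x) ->
  forall x y, y \in sq v f x -> P y = P x.
Proof.
by move=> Pv Pf x y; rewrite !inE -!orbA => /or4P[] /eqP ->; rewrite ?Pv ?Pf.
Qed.

Lemma sq_eq_mem s y : s \in SQ v f -> (sq v f y == s) = (y \in s).
Proof.
case/imsetP=> x _ ->; apply/eqP/idP => [<- | ]; first exact: mem_sq.
by rewrite !inE -!orbA => /or4P[] /eqP ->; rewrite ?sq_v ?sq_f.
Qed.

Lemma mem_sq_f s y : s \in SQ v f -> (f y \in s) = (y \in s).
Proof. by move=> SQs; rewrite -!sq_eq_mem ?sq_f. Qed.

Lemma card_fedges s (u : {set T}) :
  s \in SQ v f -> (forall y, (f y \in u) = (y \in u)) ->
  (#|[set e in fedges f s | e \subset u]|).*2 = #|s :&: u|.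
Proof.
move=> SQs fu; rewrite (card_closed_pairs fK f_neq (X := s :&: u)); last first.
  by move=> y; rewrite !inE mem_sq_f ?fu.
congr (_.*2); apply: eq_card => e; rewrite inE; apply/andP/imsetP.
  case=> /imsetP[y sy ->] /subsetP/(_ y); rewrite !inE eqxx => /(_ isT) uy.
  by exists y; rewrite ?inE ?sy.
case=> y; rewrite inE => /andP[sy uy] ->; split; first exact: imset_f.
by apply/subsetP => z; rewrite !inE => /orP[] /eqP ->; rewrite ?fu.
Qed.

(* A square of c meets u in twice as many corners as it has f-edges inside u,
   and every corner lies on exactly one square. *)
Lemma degD_double (c : {set {set T}}) (u : {set T}) :
  c \subset SQ v f -> (forall y, (f y \in u) = (y \in u)) ->
  (degD f c u).*2 = #|u :&: sq v f @^-1: c|.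
Proof.
move=> cSQ fu; rewrite -sum1_card (partition_big (sq v f) (mem c)) => [|y].
  2: by rewrite !inE => /andP[].
rewrite /degD -muln2 big_distrl; apply: eq_bigr => s cs /=; rewrite muln2.
have SQs : s \in SQ v f by apply: (subsetP cSQ).
rewrite card_fedges // sum1dep_card; apply: eq_card => y.
rewrite !inE sq_eq_mem // andbC; case ys: (y \in s); rewrite ?andbF //.
by move: ys; rewrite -(sq_eq_mem y SQs) => /eqP ->; rewrite cs !andbT.
Qed.

Lemma imbalance_sub_SQ (A : {set T}) : imbalance v f A \subset SQ v f.
Proof. by apply/subsetP => s /setIdP[]. Qed.

Lemma coboundM_sub_SQ (W : {set {set T}}) : coboundM v f a W \subset SQ v f.
Proof. by apply/subsetP => _ /imsetP[x _ ->]; exact: sq_in_SQ. Qed.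

Lemma mem_imbalance (A : {set T}) x : balancing v a A ->
  (sq v f x \in imbalance v f A) = ((x \in A) == (f x \in A)).
Proof.
case/(balancingP _ vK)=> Av _; pose P y := (y \in A) == (f y \in A).
have Pv y : P (v y) = P y by rewrite /P fvC !Av; case: (y \in A); case: (f y \in A).
have Pf y : P (f y) = P y by rewrite /P fK eq_sym.
have unbal y : ((y \in A) != (f (v y) \in A)) = P y.
  by rewrite fvC Av /P; case: (y \in A); case: (f y \in A).
rewrite inE sq_in_SQ /=; apply/existsP/idP => [[y /andP[sy]] | Px].
  by rewrite unbal (mem_sq_invariant Pv Pf sy).
by exists x; rewrite mem_sq unbal.
Qed.

Lemma preim_sq_imbalance (A : {set T}) : balancing v a A ->
  sq v f @^-1: imbalance v f A = [set y | (y \in A) == (f y \in A)].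
Proof. by move=> bA; apply/setP => y; rewrite in_set -mem_imbalance // in_set. Qed.

Lemma mem_coboundM (W : {set {set T}}) x :
  (sq v f x \in coboundM v f a W) = ((vaorb v a x \in W) != (vaorb v a (f x) \in W)).
Proof.
pose P y := (vaorb v a y \in W) != (vaorb v a (f y) \in W).
have Pv y : P (v y) = P y by rewrite /P fvC !(vaorb_v vK aK).
have Pf y : P (f y) = P y by rewrite /P fK eq_sym.
apply/imsetP/idP => [[y] | Px]; last by exists x; rewrite // inE.
rewrite inE => Py /eqP; rewrite sq_eq_mem ?sq_in_SQ // => xy.
by rewrite -/(P x) (mem_sq_invariant Pv Pf xy).
Qed.

Lemma imbalance_switch (A : {set T}) (W : {set {set T}}) : balancing v a A ->
  imbalance v f (switch v a A W) = symdiff (imbalance v f A) (coboundM v f a W).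
Proof.
move=> bA; have bS := balancing_switch vK aK W bA.
apply/setP => s; rewrite in_symdiff.
have [/imsetP[x _ ->] | notSQ] := boolP (s \in SQ v f).
  rewrite !mem_imbalance // mem_coboundM !inE.
  by case: (x \in A); case: (f x \in A); case: (vaorb v a x \in W);
    case: (vaorb v a (f x) \in W).
have notin (B : {set {set T}}) : B \subset SQ v f -> (s \in B) = false.
  by move=> /subsetP BSQ; apply: contraNF notSQ; apply: BSQ.
by rewrite !notin ?imbalance_sub_SQ ?coboundM_sub_SQ.
Qed.

Lemma card_monochromatic (A u : {set T}) : (forall x, (a x \in A) = (x \notin A)) ->
  (forall y, (f y \in u) = (y \in u)) -> (forall y, (a y \in u) = (y \in u)) ->
  #|u :&: [set y | (y \in A) == (f y \in A)] :&: A| =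
  #|u :&: [set y | (y \in A) == (f y \in A)] :\: A|.
Proof.
move=> Aa fu au; set F := f @^-1: A.
have -> : u :&: [set y | (y \in A) == (f y \in A)] :&: A = u :&: A :&: F.
  by apply/setP => y; rewrite !inE; case: (y \in A); case: (f y \in A); rewrite ?andbF.
have -> : u :&: [set y | (y \in A) == (f y \in A)] :\: A = u :\: A :\: F.
  apply/setP => y; rewrite !inE.
  by case: (y \in A); case: (f y \in A); rewrite ?andbF ?andbT.
have card_a : #|u :&: A| = #|u :\: A|.
  rewrite -(card_preimset _ (can_inj aK)); apply: eq_card => y.
  by rewrite !inE au Aa andbC.
have card_f : #|u :&: A :\: F| = #|(u :\: A) :&: F|.
  rewrite -(card_preimset _ (can_inj fK)); apply: eq_card => y.
  by rewrite !inE fu fK; case: (y \in A); case: (y \in u); rewrite ?andbF.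
move: card_a; rewrite -(cardsID F (u :&: A)) -(cardsID F (u :\: A)) card_f addnC.
exact: addnI.
Qed.

Lemma imbalance_degD_even (A u : {set T}) : balancing v a A ->
  (forall y, (f y \in u) = (y \in u)) -> (forall y, (a y \in u) = (y \in u)) ->
  ~~ odd (degD f (imbalance v f A) u).
Proof.
move=> bA fu au; have [_ Aa] := (balancingP _ vK A).1 bA.
set M := [set y | (y \in A) == (f y \in A)].
have MA_f y : (f y \in u :&: M :&: A) = (y \in u :&: M :&: A).
  by rewrite !inE fu fK; case: (y \in A); case: (f y \in A); rewrite ?andbF.
have := degD_double (imbalance_sub_SQ A) fu.
rewrite preim_sq_imbalance // -(cardsID A) -card_monochromatic // addnn.
by move/double_inj ->; rewrite (card_closed_pairs fK f_neq MA_f) odd_double.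
Qed.

Lemma imbalance_cycleD (A : {set T}) :
  balancing v a A -> cycleD v f a (imbalance v f A).
Proof.
move=> bA; split=> [|_ /imsetP[x0 _ ->]]; first exact: imbalance_sub_SQ.
have fa_sym := connect_sym_involutions fK aK.
apply: imbalance_degD_even => // y; rewrite !inE.
  by rewrite (same_connect1r fa_sym (_ : farel f a y (f y))) // /farel /= eqxx.
by rewrite (same_connect1r fa_sym (_ : farel f a y (a y))) // /farel /= eqxx orbT.
Qed.

End Map.

Theorem theorem4p3 (T : finType) (v f a : T -> T) (hM : is_map v f a) :
  exists c : {set {set T}},
    cycleD v f a c /\
    (forall S : {set {set T}},
        is_imbalance v f a S <->
        exists b : {set {set T}},
          in_coboundary_space v f a b /\ S = symdiff c b).
Proof.
have [A0 bA0] := balancing_exists (vK hM) (aK hM) (v_neq hM) (a_neq hM).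
exists (imbalance v f A0); split; first exact: imbalance_cycleD.
move=> S; split=> [[A [bA ->]] | [_ [[W [_ ->]] ->]]].
  have [W VW ->] := balancing_eq_switch (vK hM) bA0 bA.
  by exists (coboundM v f a W); split; [exists W | rewrite imbalance_switch].
exists (switch v a A0 W).
by split; [exact: balancing_switch (vK hM) (aK hM) _ _ bA0 | rewrite imbalance_switch].
Qed.
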